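(* Consider the network system of the context and assume every subsystem $G_i\in\mathcal{RH}_\infty$. Then the entire network system (subsystems $G_1,\dots,G_N$, interaction $\boldsymbol v=\boldsymbol L\boldsymbol w$, decentralized controller $u_i=K_iy_i$) is internally stable for every interaction $\boldsymbol L$ such that the preexisting system $\boldsymbol G_{\rm pre}$ is internally stable if and only if each $K_i$, $i=1,\dots,N$, is a retrofit controller for $G_i$, i.e. (equivalently) $K_i=(I+Q_iG_{y_iu_i})^{-1}Q_i$ for some $Q_i\in\mathcal{RH}_\infty$ with $G_{w_iu_i}Q_iG_{y_iv_i}=0$.
   Context: For $i=1,\dots,N$, subsystem $G_i$ is a proper real rational transfer matrix with inputs $(v_i,d_i,u_i)$ and outputs $(w_i,z_i,y_i)$, $G_{a_ib_i}$ denoting the block from $b_i$ to $a_i$. Stacked signals $\boldsymbol v=\mathrm{col}(v_1,\dots,v_N)$ etc.; the interaction is $\boldsymbol v=\boldsymbol L\boldsymbol w$ with $\boldsymbol L=[L_{ij}]$ an arbitrary proper real rational (possibly dynamic) transfer matrix; the decentralized controller is $\boldsymbol u=\boldsymbol K\boldsymbol y$, $\boldsymbol K=\mathrm{diag}(K_1,\dots,K_N)$. Let $\boldsymbol G_{\boldsymbol{wv}}:=\mathrm{diag}(G_{w_iv_i})$ and similarly for other blocks. The preexisting system $\boldsymbol G_{\rm pre}$ is the loop $\boldsymbol w=\boldsymbol G_{\boldsymbol{wv}}\boldsymbol v$, $\boldsymbol v=\boldsymbol L\boldsymbol w$. All feedback systems are well-posed; internal stability is standard. $\mathcal{RH}_\infty$: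 stable proper real rational transfer matrices. For a single subsystem $G$ (inputs $v,d,u$; outputs $w,z,y$), a controller $u=Ky$ is a retrofit controller if the feedback system of $G$, $u=Ky$, and $v=\overline{G}w$ is internally stable for every proper real rational $\overline{G}$ such that the loop $w=G_{wv}v$, $v=\overline{G}w$ is internally stable. *)

From HB Require Import structures.
From mathcomp Require Import all_boot all_order all_algebra.
From mathcomp Require Import fraction.
Set Implicit Arguments. Unset Strict Implicit. Unset Printing Implicit Defensive.
Import Order.TTheory GRing.Theory Num.Theory.
Local Open Scope ring_scope.

(* Transfer functions: elements of the field of rational functions C(s),
   C an algebraically closed numeric field (model of the complex numbers). *)
Definition tf (C : numClosedFieldType) := {fraction {poly C}}.

Notation "x %:F" := (@FracField.tofrac _ x) : ring_scope.

Definition realpoly (C : numClosedFieldType) (p : {poly C}) : Prop :=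
  forall k, p`_k \is Num.real.

Definition prr (C : numClosedFieldType) (f : tf C) : Prop :=
  exists p q : {poly C}, [/\ q != 0, realpoly p, realpoly q,
    (size p <= size q)%N & f = (p%:F) / (q%:F)].

Definition RH (C : numClosedFieldType) (f : tf C) : Prop :=
  exists p q : {poly C}, [/\ q != 0, realpoly p /\ realpoly q,
    (size p <= size q)%N,
    (forall z : C, root q z -> 'Re z < 0) & f = (p%:F) / (q%:F)].

Definition mx_prr (C : numClosedFieldType) m n (A : 'M[tf C]_(m, n)) : Prop :=
  forall i j, prr (A i j).
Definition mx_RH (C : numClosedFieldType) m n (A : 'M[tf C]_(m, n)) : Prop :=
  forall i j, RH (A i j).

(* Internal stability (incl. well-posedness) of the loop
   y = P (u + e_u), u = K (y + e_y):
   all maps (e_u, e_y) -> (u, y) are in RH_infinity. *)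
Definition loop_stable (C : numClosedFieldType) (a b : nat)
  (P : 'M[tf C]_(a, b)) (K : 'M[tf C]_(b, a)) : Prop :=
  let S := invmx (1%:M - K *m P) in
  [/\ (1%:M - K *m P) \in unitmx,
      mx_RH (S *m K *m P), mx_RH (S *m K),
      mx_RH (P + P *m S *m K *m P) & mx_RH (P *m S *m K)].

(* Internal stability (incl. well-posedness) of the generalized plant
   [z; y] = [P11 P12; P21 P22] [d; u + e_u] with u = K (y + e_y):
   all maps (d, e_u, e_y) -> (z, y, u) are in RH_infinity. *)
Definition lft_stable (C : numClosedFieldType) (nz nd ny nu : nat)
  (P11 : 'M[tf C]_(nz, nd)) (P12 : 'M[tf C]_(nz, nu))
  (P21 : 'M[tf C]_(ny, nd)) (P22 : 'M[tf C]_(ny, nu))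
  (K : 'M[tf C]_(nu, ny)) : Prop :=
  let S := invmx (1%:M - K *m P22) in
  [/\ (1%:M - K *m P22) \in unitmx,
      [/\ mx_RH (S *m K *m P21), mx_RH (S *m K *m P22) & mx_RH (S *m K)],
      [/\ mx_RH (P21 + P22 *m S *m K *m P21), mx_RH (P22 + P22 *m S *m K *m P22) &
          mx_RH (P22 *m S *m K)] &
      [/\ mx_RH (P11 + P12 *m S *m K *m P21), mx_RH (P12 + P12 *m S *m K *m P22) &
          mx_RH (P12 *m S *m K)]].

Record subsys (C : numClosedFieldType) (nv nd nu nw nz ny : nat) := Subsys {
  Gwv : 'M[tf C]_(nw, nv); Gwd : 'M[tf C]_(nw, nd); Gwu : 'M[tf C]_(nw, nu);
  Gzv : 'M[tf C]_(nz, nv); Gzd : 'M[tf C]_(nz, nd); Gzu : 'M[tf C]_(nz, nu);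
  Gyv : 'M[tf C]_(ny, nv); Gyd : 'M[tf C]_(ny, nd); Gyu : 'M[tf C]_(ny, nu) }.

Definition subsys_RH (C : numClosedFieldType) nv nd nu nw nz ny
  (G : subsys C nv nd nu nw nz ny) : Prop :=
  [/\ [/\ mx_RH (Gwv G), mx_RH (Gwd G) & mx_RH (Gwu G)],
      [/\ mx_RH (Gzv G), mx_RH (Gzd G) & mx_RH (Gzu G)] &
      [/\ mx_RH (Gyv G), mx_RH (Gyd G) & mx_RH (Gyu G)]].

(* Feedback system of G, u = K y and v = Gbar w (d exogenous, z output). *)
Definition fb3_stable (C : numClosedFieldType) nv nd nu nw nz ny
  (G : subsys C nv nd nu nw nz ny) (Gbar : 'M[tf C]_(nv, nw))
  (K : 'M[tf C]_(nu, ny)) : Prop :=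
  lft_stable (Gzd G) (row_mx (Gzv G) (Gzu G)) (col_mx (Gwd G) (Gyd G))
    (block_mx (Gwv G) (Gwu G) (Gyv G) (Gyu G))
    (block_mx Gbar 0 0 K).

Definition retrofit (C : numClosedFieldType) nv nd nu nw nz ny
  (G : subsys C nv nd nu nw nz ny) (K : 'M[tf C]_(nu, ny)) : Prop :=
  forall Gbar : 'M[tf C]_(nv, nw), mx_prr Gbar ->
    loop_stable (Gwv G) Gbar -> fb3_stable G Gbar K.

Definition bdiag (T : nzRingType) (N : nat) (p q : 'I_N -> nat)
  (B : forall i, 'M[T]_(p i, q i)) : 'M[T]_(\sum_i p i, \sum_i q i) :=
  \mxblock_(i < N, j < N) (if i == j then conform_mx 0 (B i) else 0).

(* The network: stacked subsystems, v = L w, u = diag(K_i) y. *)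
Definition network_stable (C : numClosedFieldType) (N : nat)
  (nv nd nu nw nz ny : 'I_N -> nat)
  (G : forall i, subsys C (nv i) (nd i) (nu i) (nw i) (nz i) (ny i))
  (L : 'M[tf C]_(\sum_i nv i, \sum_i nw i))
  (K : forall i, 'M[tf C]_(nu i, ny i)) : Prop :=
  lft_stable (bdiag (fun i => Gzd (G i)))
    (row_mx (bdiag (fun i => Gzv (G i))) (bdiag (fun i => Gzu (G i))))
    (col_mx (bdiag (fun i => Gwd (G i))) (bdiag (fun i => Gyd (G i))))
    (block_mx (bdiag (fun i => Gwv (G i))) (bdiag (fun i => Gwu (G i)))
              (bdiag (fun i => Gyv (G i))) (bdiag (fun i => Gyu (G i))))
    (block_mx L 0 0 (bdiag K)).

(* Preexisting system: w = diag(G_wv) v, v = L w. *)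
Definition pre_stable (C : numClosedFieldType) (N : nat)
  (nv nd nu nw nz ny : 'I_N -> nat)
  (G : forall i, subsys C (nv i) (nd i) (nu i) (nw i) (nz i) (ny i))
  (L : 'M[tf C]_(\sum_i nv i, \sum_i nw i)) : Prop :=
  loop_stable (bdiag (fun i => Gwv (G i))) L.

From HB Require Import structures.
From mathcomp Require Import all_boot all_order all_algebra.
From mathcomp Require Import fraction.
From mathcomp Require Import ring.
Set Implicit Arguments. Unset Strict Implicit. Unset Printing Implicit Defensive.
Import Order.TTheory GRing.Theory Num.Theory.
Local Open Scope ring_scope.

(* Transfer functions live in the fraction field of C[s]; RH_infinity is the
   subring of proper real rational functions with poles in Re s < 0.  For a
   stable plant P, internal stability of the loop u = K y reduces to the
   existence of a stable T with (I - K P) T = K ("K stabilizes P").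

   The core result is a characterization of retrofit controllers of a stable
   subsystem G: K is retrofit iff it has a stable Youla parameter
   Q = (I - K Gyu)^-1 K with Gwu Q Gyv = 0.  Sufficiency is an explicit
   closed-loop formula.  Necessity: the environment Gbar = 0 yields Q, and if
   Gwu Q Gyv were nonzero, a rank-one proper real rational environment
   stabilizing Gwv but not Gwv + Gwu Q Gyv would violate the retrofit
   property; that environment is built from a first-order function
   c / (s + 1) placing a closed-loop pole at a point s0 >= 0.

   The network is the block-diagonal stacking of its subsystems, so network
   stability for all admissible interactions is the retrofit property of
   diag(K_i) for the stacked subsystem, and Youla parameters of the stack are
   exactly block-diagonal families of local ones.  Algebraically,
   Q = (I - K Gyu)^-1 K is equivalent to K = (I + Q Gyu)^-1 Q. *)

Section StableRationalFunctions.
Variable C : numClosedFieldType.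
Implicit Types (p q : {poly C}) (f g : tf C).

Lemma realpolyD p q : realpoly p -> realpoly q -> realpoly (p + q).
Proof. by move=> hp hq k; rewrite coefD rpredD. Qed.

Lemma realpolyM p q : realpoly p -> realpoly q -> realpoly (p * q).
Proof. by move=> hp hq k; rewrite coefM rpred_sum // => i _; rewrite rpredM. Qed.

Lemma realpolyC (c : C) : c \is Num.real -> realpoly c%:P.
Proof. by move=> hc k; rewrite coefC; case: ifP. Qed.

Lemma realpolyX : realpoly ('X : {poly C}).
Proof. by move=> k; rewrite coefX; case: (k == 1)%N. Qed.

Lemma horner_real p (x : C) : realpoly p -> x \is Num.real -> p.[x] \is Num.real.
Proof. by move=> hp hx; rewrite horner_coef rpred_sum // => i _; rewrite rpredM ?rpredX. Qed.

(* A stable denominator does not vanish at the nonnegative integers,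
   which lie in the closed right half plane. *)
Lemma stable_den_neq0 q (n : nat) :
  (forall z, root q z -> 'Re z < 0) -> q.[n%:R] != 0.
Proof.
move=> hq; apply/negP => qn0; have := hq n%:R; rewrite /root qn0.
have -> : 'Re (n%:R : C) = n%:R by apply/Creal_ReP; rewrite realn.
by move=> /(_ isT); apply/negP; rewrite -real_leNgt ?realn ?real0.
Qed.

Lemma RH_prr f : RH f -> prr f.
Proof. by move=> [p [q [nq [rp rq] spq _ ->]]]; exists p, q. Qed.

Lemma RH0 : RH (0 : tf C).
Proof.
exists 0, 1; split; rewrite ?oner_eq0 ?size_poly0 ?tofrac0 ?mul0r //.
- by split; [rewrite -[0]/(0%:P : {poly C}) | rewrite -[1]/(1%:P : {poly C})];
    apply: realpolyC; rewrite ?real0 ?real1.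
- by move=> z; rewrite (negbTE (root1 z)).
Qed.

Lemma prr0 : prr (0 : tf C).
Proof. exact: RH_prr RH0. Qed.

Lemma RHD f g : RH f -> RH g -> RH (f + g).
Proof.
move=> [p1 [q1 [nq1 [rp1 rq1] s1 h1 ->]]] [p2 [q2 [nq2 [rp2 rq2] s2 h2 ->]]].
exists (p1 * q2 + p2 * q1), (q1 * q2); split.
- by rewrite mulf_neq0.
- by split; [apply: realpolyD|]; apply: realpolyM.
- apply: leq_trans (size_polyD _ _) _; rewrite geq_max (size_mul nq1 nq2).
  apply/andP; split; apply: leq_trans (size_polyMleq _ _) _;
    rewrite -!subn1 leq_sub2r //; first by rewrite leq_add2r.
  by rewrite addnC leq_add2l.
- by move=> z; rewrite rootM => /orP [/h1|/h2].
- by rewrite tofracD !tofracM addf_div // tofrac_eq0.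
Qed.

Lemma RHM f g : RH f -> RH g -> RH (f * g).
Proof.
move=> [p1 [q1 [nq1 [rp1 rq1] s1 h1 ->]]] [p2 [q2 [nq2 [rp2 rq2] s2 h2 ->]]].
exists (p1 * p2), (q1 * q2); split.
- by rewrite mulf_neq0.
- by split; apply: realpolyM.
- apply: leq_trans (size_polyMleq _ _) _.
  by rewrite (size_mul nq1 nq2) -!subn1 leq_sub2r // leq_add.
- by move=> z; rewrite rootM => /orP [/h1|/h2].
- by rewrite !tofracM mulf_div.
Qed.

Lemma RH_sum (I : Type) (r : seq I) (P : pred I) (F : I -> tf C) :
  (forall i, P i -> RH (F i)) -> RH (\sum_(i <- r | P i) F i).
Proof. by move=> hF; apply: (big_ind (@RH C)); [exact: RH0 | exact: RHD | exact: hF]. Qed.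

Lemma mx_RH0 m n : mx_RH (0 : 'M[tf C]_(m, n)).
Proof. by move=> i j; rewrite mxE; exact: RH0. Qed.

Lemma mx_RHD m n (A B : 'M[tf C]_(m, n)) : mx_RH A -> mx_RH B -> mx_RH (A + B).
Proof. by move=> hA hB i j; rewrite mxE; apply: RHD. Qed.

Lemma mx_RHM m n l (A : 'M[tf C]_(m, n)) (B : 'M[tf C]_(n, l)) :
  mx_RH A -> mx_RH B -> mx_RH (A *m B).
Proof. by move=> hA hB i j; rewrite mxE; apply: RH_sum => k _; apply: RHM. Qed.

Lemma mx_RH_row m n1 n2 (A : 'M[tf C]_(m, n1)) (B : 'M[tf C]_(m, n2)) :
  mx_RH A -> mx_RH B -> mx_RH (row_mx A B).
Proof. by move=> hA hB i j; rewrite mxE; case: (split j). Qed.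

Lemma mx_RH_col m1 m2 n (A : 'M[tf C]_(m1, n)) (B : 'M[tf C]_(m2, n)) :
  mx_RH A -> mx_RH B -> mx_RH (col_mx A B).
Proof. by move=> hA hB i j; rewrite mxE; case: (split i). Qed.

Lemma mx_RH_block m1 m2 n1 n2 (A : 'M[tf C]_(m1, n1)) (B : 'M[tf C]_(m1, n2))
  (D : 'M[tf C]_(m2, n1)) (E : 'M[tf C]_(m2, n2)) :
  mx_RH A -> mx_RH B -> mx_RH D -> mx_RH E -> mx_RH (block_mx A B D E).
Proof. by move=> *; apply: mx_RH_col; apply: mx_RH_row. Qed.

Lemma mx_RH_submxblock (N M : nat) (p : 'I_N -> nat) (q : 'I_M -> nat)
  (Y : 'M[tf C]_(\sum_i p i, \sum_j q j)) i j :
  mx_RH Y -> mx_RH (submxblock Y i j).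
Proof. by move=> hY k l; rewrite !mxE. Qed.

Lemma mx_prr0 m n : mx_prr (0 : 'M[tf C]_(m, n)).
Proof. by move=> i j; rewrite mxE; exact: prr0. Qed.

End StableRationalFunctions.

Section FeedbackAlgebra.
Variable R : comUnitRingType.

(* A solution T of (I - K P) T = K certifies that the return difference
   I - K P is invertible (with inverse I + T P), and then T = (I - K P)^-1 K. *)
Lemma loop_inverse a b (P : 'M[R]_(a, b)) (K : 'M[R]_(b, a)) T :
  (1%:M - K *m P) *m T = K ->
  (1%:M - K *m P) \in unitmx /\ invmx (1%:M - K *m P) *m K = T.
Proof.
move=> hT; have rinv : (1%:M - K *m P) *m (1%:M + T *m P) = 1%:M.
  by rewrite mulmxDr mulmx1 mulmxA hT subrK.
have [unit_rd _] := mulmx1_unit rinv.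
by split=> //; rewrite -[X in _ *m X = _]hT mulKmx.
Qed.

Lemma loop_inverse_sol a b (P : 'M[R]_(a, b)) (K : 'M[R]_(b, a)) :
  (1%:M - K *m P) \in unitmx -> (1%:M - K *m P) *m (invmx (1%:M - K *m P) *m K) = K.
Proof. by move=> u; rewrite mulmxA mulmxV // mul1mx. Qed.

Lemma youla_inverse a b (P : 'M[R]_(a, b)) (K Q : 'M[R]_(b, a)) :
  (1%:M - K *m P) *m Q = K <->
  (1%:M + Q *m P) \in unitmx /\ K = invmx (1%:M + Q *m P) *m Q.
Proof.
split.
- move=> eQ; have rinv : (1%:M - K *m P) *m (1%:M + Q *m P) = 1%:M.
    by rewrite mulmxDr mulmx1 mulmxA eQ subrK.
  have [_ u] := mulmx1_unit rinv.
  have inv_eq : invmx (1%:M + Q *m P) = 1%:M - K *m P.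
    by have := congr1 (mulmx^~ (invmx (1%:M + Q *m P))) rinv; rewrite /= mulmxK // mul1mx.
  by rewrite inv_eq eQ.
- move=> [u eK]; have hK : (1%:M + Q *m P) *m K = Q by rewrite eK mulKVmx.
  have linv : (1%:M + Q *m P) *m (1%:M - K *m P) = 1%:M.
    by rewrite mulmxBr mulmx1 mulmxA hK addrK.
  have inv_eq : 1%:M - K *m P = invmx (1%:M + Q *m P).
    by rewrite -[LHS](mulKmx u) linv mulmx1.
  by rewrite inv_eq -eK.
Qed.

Variables (nv nu nw ny : nat).
Variables (A : 'M[R]_(nw, nv)) (B : 'M[R]_(nw, nu)) (Cy : 'M[R]_(ny, nv)) (E : 'M[R]_(ny, nu)).
Variables (Gb : 'M[R]_(nv, nw)) (K : 'M[R]_(nu, ny)).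

Lemma block_return_difference :
  1%:M - block_mx Gb 0 0 K *m block_mx A B Cy E =
  block_mx (1%:M - Gb *m A) (- (Gb *m B)) (- (K *m Cy)) (1%:M - K *m E).
Proof.
rewrite mulmx_block !mul0mx addr0 add0r [1%:M]scalar_mx_block opp_block_mx add_block_mx.
by rewrite ?sub0r !addr0 !add0r.
Qed.

Lemma block_loop_solution Q X :
  (1%:M - K *m E) *m Q = K -> (1%:M - Gb *m (A + B *m Q *m Cy)) *m X = Gb ->
  (1%:M - block_mx Gb 0 0 K *m block_mx A B Cy E) *m
    block_mx X (X *m B *m Q) (Q *m Cy *m X) (Q + Q *m Cy *m X *m B *m Q) =
  block_mx Gb 0 0 K.
Proof.
move=> hQ hX; rewrite block_return_difference mulmx_block.
have e11 : (1%:M - Gb *m A) *m X + - (Gb *m B) *m (Q *m Cy *m X) = Gb.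
  apply: (etrans _ hX); rewrite !mulmxA -mulmxDl; congr (_ *m X).
  by rewrite mulmxDr opprD addrA !mulmxA !mulNmx.
have e12 : (1%:M - Gb *m A) *m (X *m B *m Q)
           + - (Gb *m B) *m (Q + Q *m Cy *m X *m B *m Q) = 0.
  rewrite mulmxDr addrCA.
  have -> : (1%:M - Gb *m A) *m (X *m B *m Q) + - (Gb *m B) *m (Q *m Cy *m X *m B *m Q)
     = ((1%:M - Gb *m A) *m X + - (Gb *m B) *m (Q *m Cy *m X)) *m B *m Q.
    by apply/esym; rewrite -(mulmxA _ B Q) (mulmxDl _ _ (B *m Q)) -!mulmxA.
  by rewrite e11 mulNmx addNr.
have e21 : - (K *m Cy) *m X + (1%:M - K *m E) *m (Q *m Cy *m X) = 0.
  by rewrite !mulmxA hQ mulNmx addNr.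
have e22 : - (K *m Cy) *m (X *m B *m Q)
           + (1%:M - K *m E) *m (Q + Q *m Cy *m X *m B *m Q) = K.
  by rewrite mulmxDr !mulmxA hQ addrCA !mulNmx addNr addr0.
by rewrite e11 e12 e21 e22.
Qed.

Lemma block_loop_reduce Q T :
  (1%:M - K *m E) *m Q = K ->
  (1%:M - block_mx Gb 0 0 K *m block_mx A B Cy E) *m T = block_mx Gb 0 0 K ->
  (1%:M - Gb *m (A + B *m Q *m Cy)) *m ulsubmx T = Gb.
Proof.
move=> hQ; rewrite -{1}(submxK T) block_return_difference mulmx_block.
move=> /eq_block_mx [e11 _ e21 _].
have [u iq] := loop_inverse hQ.
have h21 : dlsubmx T = Q *m Cy *m ulsubmx T.
  have : (1%:M - K *m E) *m dlsubmx T = K *m Cy *m ulsubmx T.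
    by move/eqP: e21; rewrite addrC addr_eq0 mulNmx opprK => /eqP.
  by move=> h; rewrite -(mulKmx u (dlsubmx T)) h !mulmxA iq.
apply: (etrans _ e11); rewrite h21 !mulmxA -mulmxDl; congr (_ *m _).
by rewrite mulmxDr opprD addrA !mulmxA !mulNmx.
Qed.

End FeedbackAlgebra.

Lemma block_loop_inner (R : comUnitRingType) nv nu nw ny
  (A : 'M[R]_(nw, nv)) (B : 'M[R]_(nw, nu)) (Cy : 'M[R]_(ny, nv)) (E : 'M[R]_(ny, nu))
  (K : 'M[R]_(nu, ny)) (T : 'M[R]_(nv + nu, nw + ny)) :
  (1%:M - block_mx 0 0 0 K *m block_mx A B Cy E) *m T = block_mx 0 0 0 K ->
  (1%:M - K *m E) *m drsubmx T = K.
Proof.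
rewrite -{1}(submxK T) block_return_difference mulmx_block.
move=> /eq_block_mx [_ e12 _ e22].
move: e12; rewrite !mul0mx subr0 oppr0 mul0mx addr0 mul1mx => e12.
by move: e22; rewrite e12 mulmx0 add0r.
Qed.

Section RankOneFeedback.
Variable R : comNzRingType.
Variables (m n : nat) (A : 'M[R]_(m, n)) (k : 'I_m) (l : 'I_n).

Lemma delta_mulmxE p (M : 'M[R]_(m, p)) i j :
  (delta_mx l k *m M) i j = (i == l)%:R * M k j.
Proof.
rewrite mxE (bigD1 k) //= mxE eqxx andbT big1 ?addr0 // => s /negbTE hs.
by rewrite mxE hs andbF mul0r.
Qed.

Lemma mulmx_deltaE p (M : 'M[R]_(p, n)) i j :
  (M *m delta_mx l k) i j = M i l * (j == k)%:R.
Proof.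
rewrite mxE (bigD1 l) //= mxE eqxx big1 ?addr0 // => s /negbTE hs.
by rewrite mxE hs mulr0.
Qed.

Lemma delta_sandwich : delta_mx l k *m A *m delta_mx l k = A k l *: delta_mx l k.
Proof.
apply/matrixP => i j; rewrite mulmx_deltaE delta_mulmxE !mxE.
by case: (i == l); case: (j == k); rewrite /= ?mulr1 ?mul1r ?mulr0 ?mul0r.
Qed.

Lemma rank_one_loop (g x : R) :
  x * (1 - g * A k l) = g ->
  (1%:M - (g *: delta_mx l k) *m A) *m (x *: delta_mx l k) = g *: delta_mx l k.
Proof.
move=> hx; rewrite mulmxBl mul1mx -!scalemxAl -scalemxAr delta_sandwich !scalerA.
by rewrite -scalerBl -[X in _ = X *: _]hx; congr (_ *: _); ring.
Qed.

Lemma rank_one_loop_entry (g : R) (Z : 'M[R]_(n, m)) :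
  (1%:M - (g *: delta_mx l k) *m A) *m Z = g *: delta_mx l k -> Z l k * (1 - g * A k l) = g.
Proof.
rewrite mulmxBl mul1mx => /eqP; rewrite subr_eq -mulmxA -scalemxAl => /eqP hZ.
have hZe i j : Z i j = g * ((i == l) && (j == k))%:R + g * ((i == l)%:R * (A *m Z) k j).
  by rewrite {1}hZ mxE; congr (_ + _); [rewrite !mxE | rewrite mxE delta_mulmxE].
have Z_row0 i j : i != l -> Z i j = 0.
  by move=> /negbTE hi; rewrite hZe hi !mul0r mulr0 addr0.
have AZ_kk : (A *m Z) k k = A k l * Z l k.
  by rewrite mxE (bigD1 l) //= big1 ?addr0 // => s hs; rewrite Z_row0 // mulr0.
have := hZe l k; rewrite !eqxx AZ_kk mulr1 mul1r => fixpt.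
by rewrite mulrBr mulr1 {1}fixpt; ring.
Qed.

End RankOneFeedback.

Lemma outer_loop_closed (F : fieldType) (x a : F) :
  1 + x * a != 0 -> x * (1 - x / (1 + x * a) * a) = x / (1 + x * a).
Proof. by move=> nz; field. Qed.

Lemma outer_loop_perturbed (F : fieldType) (x a d z : F) :
  1 + x * a != 0 -> z * (1 - x / (1 + x * a) * (a + d)) = x / (1 + x * a) ->
  z * (1 - x * d) = x.
Proof.
move=> nz hz; have diff : 1 - x / (1 + x * a) * (a + d) = (1 - x * d) / (1 + x * a).
  by field.
by move: hz; rewrite diff mulrA => /(divIf nz).
Qed.

Lemma cross_multiply (F : fieldType) (pz qz c u pd qd : F) :
  qz != 0 -> u != 0 -> qd != 0 -> pz / qz * (1 - c / u * (pd / qd)) = c / u ->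
  pz * (u * qd - c * pd) = c * qz * qd.
Proof.
move=> nqz nu nqd h; transitivity (pz / qz * (1 - c / u * (pd / qd)) * (qz * u * qd)).
  by field; rewrite nqz nu nqd.
by rewrite h; field; rewrite nu.
Qed.

Lemma first_order_feedback_fraction (F : fieldType) (c u pa qa : F) :
  u != 0 -> qa != 0 -> u * qa + c * pa != 0 ->
  1 + c / u * (pa / qa) != 0 /\ c / u / (1 + c / u * (pa / qa)) = c * qa / (u * qa + c * pa).
Proof.
move=> nu nqa nden; have ret_diff : 1 + c / u * (pa / qa) = (u * qa + c * pa) / (u * qa).
  by field; rewrite nu nqa.
rewrite ret_diff mulf_neq0 ?invr_eq0 ?mulf_neq0 //; split=> //.
by field; rewrite nu nqa nden.
Qed.

Lemma exists_nat_nonroot (C : numClosedFieldType) (p : {poly C}) :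
  p != 0 -> exists n : nat, ~~ root p n%:R.
Proof.
move=> np; have [/existsP [i hi] | /existsPn all_roots] :=
  boolP [exists i : 'I_(size p), ~~ root p (i : nat)%:R]; first by exists i.
suff : (size p < size p)%N by rewrite ltnn.
have := @max_poly_roots _ p [seq (i : nat)%:R | i <- iota 0 (size p)] np.
rewrite size_map size_iota; apply.
- apply/allP => x /mapP [i]; rewrite mem_iota add0n => /andP [_ hi] ->.
  by have := all_roots (Ordinal hi); rewrite negbK.
- by rewrite map_inj_uniq ?iota_uniq // => x y /eqP; rewrite eqr_nat => /eqP.
Qed.

Section Stabilization.
Variable C : numClosedFieldType.

(* K stabilizes the plant P: the closed loop (I - K P)^-1 K exists and is
   stable.  For a stable plant this is all of internal stability. *)
Definition stabilizes a b (P : 'M[tf C]_(a, b)) (K : 'M[tf C]_(b, a)) : Prop :=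
  exists2 T : 'M[tf C]_(b, a), mx_RH T & (1%:M - K *m P) *m T = K.

Lemma loop_stable_stabilizes a b (P : 'M[tf C]_(a, b)) (K : 'M[tf C]_(b, a)) :
  mx_RH P -> loop_stable P K <-> stabilizes P K.
Proof.
move=> hP; rewrite /loop_stable /=; split.
  by move=> [u _ hT _ _]; exists (invmx (1%:M - K *m P) *m K) => //; exact: loop_inverse_sol.
move=> [T hT eT]; have [u eS] := loop_inverse eT.
rewrite -(mulmxA P) eS.
by split=> //; do ?[apply: mx_RHD | apply: mx_RHM].
Qed.

Lemma lft_stable_stabilizes (nz nd ny nu : nat)
  (P11 : 'M[tf C]_(nz, nd)) (P12 : 'M[tf C]_(nz, nu))
  (P21 : 'M[tf C]_(ny, nd)) (P22 : 'M[tf C]_(ny, nu)) (K : 'M[tf C]_(nu, ny)) :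
  mx_RH P11 -> mx_RH P12 -> mx_RH P21 -> mx_RH P22 ->
  lft_stable P11 P12 P21 P22 K <-> stabilizes P22 K.
Proof.
move=> h11 h12 h21 h22; rewrite /lft_stable /=; split.
  move=> [u [_ _ hT] _ _]; exists (invmx (1%:M - K *m P22) *m K) => //.
  exact: loop_inverse_sol.
move=> [T hT eT]; have [u eS] := loop_inverse eT.
rewrite -!(mulmxA P22) -!(mulmxA P12) eS.
by split=> //; split; do ?[apply: mx_RHD | apply: mx_RHM].
Qed.

Definition first_order (c : C) : tf C := c%:P%:F / ('X + 1%:P)%:F.

Lemma RH_first_order (c : C) : c \is Num.real -> RH (first_order c).
Proof.
move=> rc; exists c%:P, ('X + 1%:P); split.
- by rewrite -size_poly_eq0 size_XaddC.
- split; first exact: realpolyC.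
  by apply: realpolyD; [exact: realpolyX | apply: realpolyC; exact: real1].
- by rewrite size_XaddC (leq_trans (size_polyC_leq1 c)).
- move=> z; rewrite rootE !hornerE addr_eq0 => /eqP ->.
  have -> : 'Re (-1 : C) = -1 by apply/Creal_ReP; rewrite rpredN real1.
  by rewrite oppr_lt0 ltr01.
- by [].
Qed.

Lemma prr_first_order_feedback (c : C) (a : tf C) : c \is Num.real -> prr a ->
  let x := first_order c in 1 + x * a != 0 /\ prr (x / (1 + x * a)).
Proof.
move=> rc [pa [qa [nqa rpa rqa spa ->]]]; rewrite /first_order /=.
set u : {poly C} := 'X + 1%:P.
have nu : u != 0 by rewrite -size_poly_eq0 size_XaddC.
have ru : realpoly u by apply: realpolyD; [exact: realpolyX | apply: realpolyC; exact: real1].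
set den := u * qa + c%:P * pa.
have sden : size den = (size qa).+1.
  have su : size (u * qa) = (size qa).+1 by rewrite (size_mul nu nqa) size_XaddC.
  rewrite /den size_polyDl su // ltnS; apply: leq_trans (size_polyMleq _ _) _.
  by rewrite -subn1 leq_subLR leq_add // size_polyC_leq1.
have nden : den != 0 by rewrite -size_poly_eq0 sden.
clearbody u.
have nuF : (u%:F : tf C) != 0 by rewrite tofrac_eq0.
have nqaF : (qa%:F : tf C) != 0 by rewrite tofrac_eq0.
have ndenF : u%:F * qa%:F + c%:P%:F * pa%:F != 0 :> tf C.
  by rewrite -!tofracM -tofracD tofrac_eq0.
have [nz ->] := first_order_feedback_fraction nuF nqaF ndenF.
split=> //; exists (c%:P * qa), den; split=> //.
- exact: realpolyM (realpolyC rc) rqa.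
- by apply: realpolyD; apply: realpolyM => //; exact: realpolyC.
- rewrite sden; apply: leq_trans (size_polyMleq _ _) _; rewrite -subn1 leq_subLR.
  exact: leq_add (size_polyC_leq1 c) (leqnSn _).
- by rewrite /den tofracD !tofracM.
Qed.

(* Take a natural
   number s0 where d does not vanish and g := x / (1 + x a) with
   x = c / (s + 1), c real chosen so that 1 - x d vanishes at s0.  A stable
   closed loop z of g around a + d would satisfy z (1 - x d) = x, which is
   impossible at the point s0 of the closed right half plane. *)
Lemma scalar_destabilization (a d : tf C) : RH a -> RH d -> d != 0 ->
  exists g, [/\ prr g, exists2 x, RH x & x * (1 - g * a) = g &
     forall z, RH z -> z * (1 - g * (a + d)) <> g].
Proof.
move=> ha [pd [qd [nqd [rpd rqd] _ hqd ->]]] nd.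
have npd : pd != 0 by apply: contraNneq nd => ->; rewrite tofrac0 mul0r.
have [n pd_n] := exists_nat_nonroot npd.
set s0 : C := n%:R.
have qd_n : qd.[s0] != 0 := stable_den_neq0 n hqd.
have s0_1 : s0 + 1 != 0 by rewrite /s0 natr1 pnatr_eq0.
set c := (s0 + 1) * qd.[s0] / pd.[s0].
have rc : c \is Num.real by rewrite /c !realM ?realD ?realV ?horner_real ?realn ?real1.
have nc : c != 0 by rewrite /c !mulf_neq0 ?invr_eq0.
have [nz pg] := prr_first_order_feedback rc (RH_prr ha).
exists (first_order c / (1 + first_order c * a)); split => //.
  by exists (first_order c); [exact: RH_first_order | exact: outer_loop_closed].
move=> z [pz [qz [nqz _ _ hqz ->]]] /(outer_loop_perturbed nz) hz.
set u : {poly C} := 'X + 1%:P.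
have nu : (u%:F : tf C) != 0 by rewrite tofrac_eq0 -size_poly_eq0 size_XaddC.
have : (pz * (u * qd - c%:P * pd))%:F = (c%:P * qz * qd)%:F :> tf C.
  rewrite tofracM tofracB !tofracM.
  by apply: (cross_multiply _ nu _ hz); rewrite tofrac_eq0.
move=> /eqP; rewrite tofrac_eq => /eqP /(congr1 (horner^~ s0)).
rewrite /= !hornerE /c divfK ?subrr ?mulr0 //; apply/eqP.
by rewrite eq_sym !mulf_neq0 ?invr_eq0 //; exact: stable_den_neq0 n hqz.
Qed.

(* Matrix version: for stable A and a nonzero stable perturbation D there is
   a proper real rational Gb stabilizing A but not A + D.  It acts from an
   output k to an input l with D k l != 0 only. *)
Lemma destabilization m n (A D : 'M[tf C]_(m, n)) :
  mx_RH A -> mx_RH D -> D != 0 ->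
  exists Gb : 'M[tf C]_(n, m), [/\ mx_prr Gb, stabilizes A Gb & ~ stabilizes (A + D) Gb].
Proof.
move=> hA hD nD; have [k [l nD_kl]] : exists k l, D k l != 0.
  have [/existsP [k /existsP [l ?]] | /existsPn D0] :=
    boolP [exists k, exists l, D k l != 0]; first by exists k, l.
  case/negP: nD; apply/eqP/matrixP => i j; rewrite mxE; apply/eqP.
  by have /existsPn/(_ j) := D0 i; rewrite negbK.
have [g [pg [x hx ex] ng]] := scalar_destabilization (hA k l) (hD k l) nD_kl.
exists (g *: delta_mx l k); split.
- by move=> i j; rewrite !mxE; case: (_ && _); rewrite ?mulr1 ?mulr0 //; exact: prr0.
- exists (x *: delta_mx l k); last exact: rank_one_loop.
  by move=> i j; rewrite !mxE; case: (_ && _); rewrite ?mulr1 ?mulr0 //; exact: RH0.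
- move=> [Z hZ eZ]; apply: (ng (Z l k) (hZ l k)).
  by have := rank_one_loop_entry eZ; rewrite mxE.
Qed.

End Stabilization.

Section Retrofit.
Variables (C : numClosedFieldType) (nv nd nu nw nz ny : nat).
Variable G : subsys C nv nd nu nw nz ny.
Hypothesis G_RH : subsys_RH G.

Definition interface_plant : 'M[tf C]_(nw + ny, nv + nu) :=
  block_mx (Gwv G) (Gwu G) (Gyv G) (Gyu G).

Definition youla_param (K Q : 'M[tf C]_(nu, ny)) : Prop :=
  [/\ mx_RH Q, (1%:M - K *m Gyu G) *m Q = K & Gwu G *m Q *m Gyv G = 0].

Lemma fb3_stable_stabilizes Gb K :
  fb3_stable G Gb K <-> stabilizes interface_plant (block_mx Gb 0 0 K).
Proof.
case: G_RH => [[? ? ?] [? ? ?] [? ? ?]].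
by apply: lft_stable_stabilizes; [| exact: mx_RH_row | exact: mx_RH_col | exact: mx_RH_block].
Qed.

(* Sufficiency: with a Youla parameter, any environment Gb stabilizing Gwv is
   closed by an explicit stable block matrix, since the reduced plant seen by
   Gb is Gwv + Gwu Q Gyv = Gwv. *)
Lemma youla_retrofit K Q : youla_param K Q -> retrofit G K.
Proof.
case: G_RH => [[hwv _ hwu] _ [hyv _ _]] [hQ eQ zQ].
move=> Gb _ /(loop_stable_stabilizes _ hwv) [X hX eX]; apply/fb3_stable_stabilizes.
exists (block_mx X (X *m Gwu G *m Q) (Q *m Gyv G *m X) (Q + Q *m Gyv G *m X *m Gwu G *m Q)).
  by apply: mx_RH_block; do ?[apply: mx_RHD | apply: mx_RHM].
by apply: block_loop_solution => //; rewrite zQ addr0.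
Qed.

(* Necessity: the trivial environment Gb = 0 yields the Youla parameter Q; if
   Gwu Q Gyv were nonzero, an environment stabilizing Gwv but not the reduced
   plant Gwv + Gwu Q Gyv would break the retrofit property. *)
Lemma retrofit_youla K : retrofit G K -> exists Q, youla_param K Q.
Proof.
have [[hwv _ hwu] _ [hyv _ _]] := G_RH.
move=> retro; have stab0 : loop_stable (Gwv G) 0.
  by apply/loop_stable_stabilizes => //; exists 0; [exact: mx_RH0 | rewrite mulmx0].
have [T hT eT] := proj1 (fb3_stable_stabilizes 0 K) (retro 0 (@mx_prr0 _ _ _) stab0).
have eQ := block_loop_inner eT.
have hQ : mx_RH (drsubmx T) by move=> i j; rewrite !mxE; exact: hT.
exists (drsubmx T); split=> //.
have [//|interference] := eqVneq (Gwu G *m drsubmx T *m Gyv G) 0.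
have hD : mx_RH (Gwu G *m drsubmx T *m Gyv G) by apply: mx_RHM => //; apply: mx_RHM.
have [Gb [pGb stab_wv nstab]] := destabilization hwv hD interference.
have stab_Gb := proj2 (loop_stable_stabilizes _ hwv) stab_wv.
have [T' hT' eT'] := proj1 (fb3_stable_stabilizes Gb K) (retro Gb pGb stab_Gb).
case: nstab; exists (ulsubmx T'); first by move=> i j; rewrite !mxE; exact: hT'.
exact: block_loop_reduce eQ eT'.
Qed.

Lemma retrofit_iff_youla K : retrofit G K <-> exists Q, youla_param K Q.
Proof. by split=> [/retrofit_youla | [Q /youla_retrofit]]. Qed.

End Retrofit.

Section BlockDiagonal.
Variables (T : nzRingType) (N : nat) (p q : 'I_N -> nat).
Variable B : forall i, 'M[T]_(p i, q i).

Lemma bdiagK i j : submxblock (bdiag B) i j = if i == j then conform_mx 0 (B i) else 0.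
Proof. by rewrite /bdiag mxblockK. Qed.

Lemma bdiag_mull (M : nat) (r : 'I_M -> nat) (Y : 'M[T]_(\sum_i q i, \sum_k r k)) i j :
  submxblock (bdiag B *m Y) i j = B i *m submxblock Y i j.
Proof.
rewrite -[Y]submxblockK /bdiag mul_mxblock !mxblockK.
rewrite (bigD1 i) //= eqxx conform_mx_id big1 ?addr0 // => k; rewrite eq_sym => /negbTE ->.
by rewrite mul0mx.
Qed.

Lemma bdiag_mulr (M : nat) (r : 'I_M -> nat) (Y : 'M[T]_(\sum_k r k, \sum_i p i)) i j :
  submxblock (Y *m bdiag B) i j = submxblock Y i j *m B j.
Proof.
rewrite -[Y]submxblockK /bdiag mul_mxblock !mxblockK.
rewrite (bigD1 j) //= eqxx conform_mx_id big1 ?addr0 // => k /negbTE ->.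
by rewrite mulmx0.
Qed.

End BlockDiagonal.

Lemma mx_RH_conform (C : numClosedFieldType) m n m' n' (A : 'M[tf C]_(m, n)) :
  mx_RH A -> mx_RH (conform_mx (0 : 'M[tf C]_(m', n')) A).
Proof.
move=> hA; rewrite /conform_mx; case: eqP => e1; last exact: mx_RH0.
by case: eqP => e2; [move=> i j; rewrite castmxE | exact: mx_RH0].
Qed.

Lemma mx_RH_bdiag (C : numClosedFieldType) (N : nat) (p q : 'I_N -> nat)
  (B : forall i, 'M[tf C]_(p i, q i)) :
  (forall i, mx_RH (B i)) -> mx_RH (bdiag B).
Proof.
move=> hB k l; rewrite /bdiag mxE; case: ifP => _; last by rewrite mxE; exact: RH0.
exact: mx_RH_conform.
Qed.

Section Network.
Variables (C : numClosedFieldType) (N : nat) (nv nd nu nw nz ny : 'I_N -> nat).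
Variable G : forall i, subsys C (nv i) (nd i) (nu i) (nw i) (nz i) (ny i).
Variable K : forall i, 'M[tf C]_(nu i, ny i).

Definition stacked :
    subsys C (\sum_i nv i) (\sum_i nd i) (\sum_i nu i) (\sum_i nw i) (\sum_i nz i) (\sum_i ny i) :=
  @Subsys C (\sum_i nv i) (\sum_i nd i) (\sum_i nu i) (\sum_i nw i) (\sum_i nz i) (\sum_i ny i)
    (bdiag (fun i => Gwv (G i))) (bdiag (fun i => Gwd (G i))) (bdiag (fun i => Gwu (G i)))
    (bdiag (fun i => Gzv (G i))) (bdiag (fun i => Gzd (G i))) (bdiag (fun i => Gzu (G i)))
    (bdiag (fun i => Gyv (G i))) (bdiag (fun i => Gyd (G i))) (bdiag (fun i => Gyu (G i))).

Lemma network_retrofit :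
  (forall L : 'M[tf C]_(\sum_i nv i, \sum_i nw i),
      mx_prr L -> pre_stable G L -> network_stable G L K)
  <-> retrofit stacked (bdiag K).
Proof. by []. Qed.

Lemma stacked_RH : (forall i, subsys_RH (G i)) -> subsys_RH stacked.
Proof.
move=> hG; split; split; apply: mx_RH_bdiag => i;
  by have [[? ? ?] [? ? ?] [? ? ?]] := hG i.
Qed.

Lemma youla_stacked :
  (exists Q, youla_param stacked (bdiag K) Q) <-> (forall i, exists Q, youla_param (G i) (K i) Q).
Proof.
split.
- move=> [Q [hQ eQ zQ]] i; exists (submxblock Q i i); split.
  + exact: mx_RH_submxblock.
  + have := congr1 (fun M => submxblock M i i) eQ => /=.
    rewrite mulmxBl mul1mx submxblockB -mulmxA !bdiag_mull bdiagK eqxx conform_mx_id.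
    by rewrite mulmxBl mul1mx mulmxA.
  + have := congr1 (fun M => submxblock M i i) zQ => /=.
    by rewrite bdiag_mulr bdiag_mull submxblock0.
- move=> hQ; have [Q hQi] := fin_all_exists hQ.
  exists (bdiag Q); split.
  + by apply: mx_RH_bdiag => i; case: (hQi i).
  + apply/mxblockP => i j.
    rewrite mulmxBl mul1mx submxblockB -mulmxA !bdiag_mull !bdiagK.
    case: eqVneq => [<-|_]; last by rewrite !mulmx0 subr0.
    by rewrite !conform_mx_id; case: (hQi i) => _ + _; rewrite mulmxBl mul1mx mulmxA.
  + apply/mxblockP => i j.
    rewrite bdiag_mulr bdiag_mull bdiagK submxblock0.
    case: eqVneq => [<-|_]; last by rewrite mulmx0 mul0mx.
    by rewrite conform_mx_id; case: (hQi i).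
Qed.

End Network.

Theorem theorem3 (C : numClosedFieldType) (N : nat)
  (nv nd nu nw nz ny : 'I_N -> nat)
  (G : forall i, subsys C (nv i) (nd i) (nu i) (nw i) (nz i) (ny i))
  (K : forall i, 'M[tf C]_(nu i, ny i)) :
  (forall i, subsys_RH (G i)) ->
  (forall i, mx_prr (K i)) ->
  ((forall L : 'M[tf C]_(\sum_i nv i, \sum_i nw i),
      mx_prr L -> pre_stable G L -> network_stable G L K)
   <-> (forall i, retrofit (G i) (K i)))
  /\
  ((forall i, retrofit (G i) (K i)) <->
   (forall i, exists Q : 'M[tf C]_(nu i, ny i),
      [/\ mx_RH Q, (1%:M + Q *m Gyu (G i)) \in unitmx,
          K i = invmx (1%:M + Q *m Gyu (G i)) *m Q &
          Gwu (G i) *m Q *m Gyv (G i) = 0])).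
Proof.
move=> hG _.
have local_retrofit : (forall i, retrofit (G i) (K i)) <->
                      (forall i, exists Q, youla_param (G i) (K i) Q).
  by split=> h i; apply/(retrofit_iff_youla (hG i)).
split.
- by rewrite network_retrofit (retrofit_iff_youla (stacked_RH hG)) youla_stacked local_retrofit.
- rewrite local_retrofit; split=> h i; have [Q [hQ eQ zQ]] := h i; exists Q.
  + by have [u eK] := proj1 (youla_inverse _ _ _) eQ.
  + by split=> //; apply/youla_inverse.
Qed.
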